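(* Let $\tau\in F_2$ and let $[a,b]$ be $[(\tfrac12,0),(0,0)]$ or $[(\tfrac12,0),(0,\tfrac12)]$. Then $$|\theta_{a,b}(0,\tau)|\,e^{\pi\,{}^ta\operatorname{Im}\tau\,a}\ge 4-\Big(1+\Big(1+\tfrac{\sqrt6}{\sqrt{\operatorname{Im}\tau_1}}\Big)e^{-\pi\operatorname{Im}\tau_1/6}\Big)\Big(2+\Big(1+\tfrac{2}{\sqrt{\operatorname{Im}\tau_2}}\Big)e^{-\pi\operatorname{Im}\tau_2/4}\Big)-\Big(1+\Big(2+\tfrac{\sqrt2}{\sqrt{\operatorname{Im}\tau_2}}\Big)e^{-\pi\operatorname{Im}\tau_2/2}\Big)-e^{-\pi\operatorname{Im}\tau_2}-\Big(1+\Big(1+\tfrac{\sqrt2}{\sqrt{\operatorname{Im}\tau_2}}\Big)e^{-\pi\operatorname{Im}\tau_2/2}\Big)e^{-2\pi\operatorname{Im}\tau_1},$$ and this bound is positive when $\operatorname{Im}\tau_1\ge4$. The same bound, with $\tau_1$ and $\tau_2$ exchanged, holds for the characteristics $[(0,\tfrac12),(0,0)]$ and $[(0,\tfrac12),(\tfrac12,0)]$.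
   Context: $F_2$ is the standard Siegel fundamental domain for $\mathrm{Sp}_4(\mathbb{Z})$ acting on symmetric complex $2\times2$ matrices $\tau=\begin{pmatrix}\tau_1&\tau_{12}\\ \tau_{12}&\tau_2\end{pmatrix}$ with $\operatorname{Im}\tau>0$; every $\tau\in F_2$ satisfies $|\operatorname{Re}\tau_{ij}|\le 1/2$, $\operatorname{Im}\tau_2\ge\operatorname{Im}\tau_1\ge 2\operatorname{Im}\tau_{12}\ge 0$, $\operatorname{Im}\tau_1\ge\sqrt3/2$. $\theta_{a,b}(Z,\tau)=\sum_{n\in\mathbb{Z}^2}\exp\big(2i\pi(\tfrac12{}^t(n+a)\tau(n+a)+{}^t(n+a)(Z+b))\big)$. *)

From Stdlib Require Import Reals ZArith.
Open Scope R_scope.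

Definition Cx := (R * R)%type.
Definition Cadd (z w : Cx) : Cx := (fst z + fst w, snd z + snd w).
Definition Csub (z w : Cx) : Cx := (fst z - fst w, snd z - snd w).
Definition Cmul (z w : Cx) : Cx :=
  (fst z * fst w - snd z * snd w, fst z * snd w + snd z * fst w).
Definition Cscal (r : R) (z : Cx) : Cx := (r * fst z, r * snd z).
Definition Cnorm (z : Cx) : R := sqrt (fst z ^ 2 + snd z ^ 2).
Definition Cexp (z : Cx) : Cx := (exp (fst z) * cos (snd z), exp (fst z) * sin (snd z)).
Definition Ci : Cx := (0, 1).
Definition CofR (r : R) : Cx := (r, 0).

(** A symmetric complex 2x2 matrix tau = [[t1, t12], [t12, t2]]. *)
Record Sym2 := mkSym2 { t1 : Cx; t12 : Cx; t2 : Cx }.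
Definition Im1 (t : Sym2) : R := snd (t1 t).
Definition Im12 (t : Sym2) : R := snd (t12 t).
Definition Im2 (t : Sym2) : R := snd (t2 t).

Record Mat2Z := mkMat2Z { m11 : Z; m12 : Z; m21 : Z; m22 : Z }.
Definition mulZ (A B : Mat2Z) : Mat2Z :=
  mkMat2Z (m11 A * m11 B + m12 A * m21 B)%Z (m11 A * m12 B + m12 A * m22 B)%Z
          (m21 A * m11 B + m22 A * m21 B)%Z (m21 A * m12 B + m22 A * m22 B)%Z.
Definition trZ (A : Mat2Z) : Mat2Z := mkMat2Z (m11 A) (m21 A) (m12 A) (m22 A).
Definition subZ (A B : Mat2Z) : Mat2Z :=
  mkMat2Z (m11 A - m11 B)%Z (m12 A - m12 B)%Z (m21 A - m21 B)%Z (m22 A - m22 B)%Z.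
Definition idZ : Mat2Z := mkMat2Z 1 0 0 1.

(** [[A,B],[C,D]] is in Sp_4(Z), i.e. M^T J M = J with J = [[0,I],[-I,0]]. *)
Definition is_Sp4Z (A B C D : Mat2Z) : Prop :=
  mulZ (trZ A) C = mulZ (trZ C) A /\
  mulZ (trZ B) D = mulZ (trZ D) B /\
  subZ (mulZ (trZ A) D) (mulZ (trZ C) B) = idZ.

Definition detCtauD (C D : Mat2Z) (t : Sym2) : Cx :=
  let e (c1 c2 d : Z) (x y : Cx) := Cadd (Cadd (Cscal (IZR c1) x) (Cscal (IZR c2) y)) (CofR (IZR d)) in
  let M11 := e (m11 C) (m12 C) (m11 D) (t1 t) (t12 t) in
  let M12 := e (m11 C) (m12 C) (m12 D) (t12 t) (t2 t) in
  let M21 := e (m21 C) (m22 C) (m21 D) (t1 t) (t12 t) in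
  let M22 := e (m21 C) (m22 C) (m22 D) (t12 t) (t2 t) in
  Csub (Cmul M11 M22) (Cmul M12 M21).

Definition in_H2 (t : Sym2) : Prop :=
  0 < Im1 t /\ 0 < Im1 t * Im2 t - Im12 t ^ 2.

Definition in_F2 (t : Sym2) : Prop :=
  in_H2 t /\
  Rabs (fst (t1 t)) <= 1/2 /\ Rabs (fst (t12 t)) <= 1/2 /\ Rabs (fst (t2 t)) <= 1/2 /\
  (* Im tau Minkowski-reduced *)
  Im2 t >= Im1 t /\ Im1 t >= 2 * Im12 t /\ 2 * Im12 t >= 0 /\
  (forall A B C D : Mat2Z, is_Sp4Z A B C D -> Cnorm (detCtauD C D t) >= 1).

Definition R2 := (R * R)%type.
Definition C2 := (Cx * Cx)%type.

(** The summand of theta_{a,b}(Z, tau) at n in Z^2: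
    exp(2 i pi ( 1/2 (n+a)^t tau (n+a) + (n+a)^t (Z + b) )). *)
Definition theta_term (a b : R2) (Zv : C2) (t : Sym2) (n1 n2 : Z) : Cx :=
  let x1 := IZR n1 + fst a in
  let x2 := IZR n2 + snd a in
  let quad := Cadd (Cadd (Cscal (x1 * x1) (t1 t)) (Cscal (2 * x1 * x2) (t12 t)))
                   (Cscal (x2 * x2) (t2 t)) in
  let lin := Cadd (Cscal x1 (Cadd (fst Zv) (CofR (fst b))))
                  (Cscal x2 (Cadd (snd Zv) (CofR (snd b)))) in
  Cexp (Cmul (Cscal (2 * PI) Ci) (Cadd (Cscal (1/2) quad) lin)).

Definition theta_partial (a b : R2) (Zv : C2) (t : Sym2) (N : nat) : Cx :=
  let f i j := theta_term a b Zv t (Z.of_nat i - Z.of_nat N)%Z (Z.of_nat j - Z.of_nat N)%Z in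
  (sum_f_R0 (fun i => sum_f_R0 (fun j => fst (f i j)) (2 * N)) (2 * N),
   sum_f_R0 (fun i => sum_f_R0 (fun j => snd (f i j)) (2 * N)) (2 * N)).

(** v is the value of theta_{a,b}(Z,tau) (the series converges absolutely on H_2;
    we take the limit of the square partial sums). *)
Definition theta_is (a b : R2) (Zv : C2) (t : Sym2) (v : Cx) : Prop :=
  Un_cv (fun N => fst (theta_partial a b Zv t N)) (fst v) /\
  Un_cv (fun N => snd (theta_partial a b Zv t N)) (snd v).

Definition C2zero : C2 := ((0, 0), (0, 0)).

Definition aImA (a : R2) (t : Sym2) : R :=
  fst a * fst a * Im1 t + 2 * fst a * snd a * Im12 t + snd a * snd a * Im2 t.

Definition theta_bound (y1 y2 : R) : R :=
  4 - (1 + (1 + sqrt 6 / sqrt y1) * exp (- PI * y1 / 6))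
        * (2 + (1 + 2 / sqrt y2) * exp (- PI * y2 / 4))
    - (1 + (2 + sqrt 2 / sqrt y2) * exp (- PI * y2 / 2))
    - exp (- PI * y2)
    - (1 + (1 + sqrt 2 / sqrt y2) * exp (- PI * y2 / 2)) * exp (- 2 * PI * y1).

From Stdlib Require Import Reals ZArith Lra Lia Psatz Bool.
Open Scope R_scope.

(* Lower bound for |theta_{a,b}(0,tau)|, tau in F_2, at the four even
   characteristics with a = (1/2,0) or a = (0,1/2).

   For these characteristics the two lattice terms n = (0,0) and
   n = -2a have the same value z (b is orthogonal to a, so it does not
   distinguish them), and on the reduced domain every term is dominated by
   |z| * u(n1) * v(n2) with u, v geometric in |n_i|.  If a double series is
   dominated by g with total mass B and has two equal terms z that are
   themselves dominated by g, then it converges and its sum w satisfies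
   |w| >= 2|z| - (B - 2|z|) = 4|z| - B.  Normalising by |z| e^{pi ta Im(tau) a} = 1
   gives |theta| e^{pi ta Im(tau) a} >= 4 - M, with M the product of the two
   geometric masses; M <= 3 as soon as Im tau_1 > 4/3, while for Im tau_1 <= 4/3
   the stated bound is nonpositive.  Since theta_bound <= 1 always, this proves
   the stated inequality (in the stronger form |theta| e^{...} >= 1 when
   Im tau_1 > 4/3); positivity of the bound for Im tau_1 >= 4 is numerical. *)

Definition symsum (g : Z -> R) (N : nat) : R :=
  sum_f_R0 (fun i => g (Z.of_nat i - Z.of_nat N)%Z) (2 * N).

Definition SQ (h : Z -> Z -> R) (N : nat) : R :=
  symsum (fun n1 => symsum (fun n2 => h n1 n2) N) N.

Lemma symsum_0 g : symsum g 0 = g 0%Z.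
Proof. reflexivity. Qed.

Lemma symsum_S g N :
  symsum g (S N) = symsum g N + g (- Z.of_nat (S N))%Z + g (Z.of_nat (S N)).
Proof.
  unfold symsum.
  replace (2 * S N)%nat with (S (S (2 * N))) by lia.
  rewrite tech5, decomp_sum by lia. simpl pred.
  replace (Z.of_nat (S (S (2 * N))) - Z.of_nat (S N))%Z with (Z.of_nat (S N)) by lia.
  replace (Z.of_nat 0 - Z.of_nat (S N))%Z with (- Z.of_nat (S N))%Z by lia.
  rewrite (sum_eq (fun i => g (Z.of_nat (S i) - Z.of_nat (S N))%Z)
                  (fun i => g (Z.of_nat i - Z.of_nat N)%Z)).
  - simpl. ring.
  - intros i _. f_equal. lia.
Qed.

Lemma symsum_ext g1 g2 N :
  (forall n, (- Z.of_nat N <= n <= Z.of_nat N)%Z -> g1 n = g2 n) ->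
  symsum g1 N = symsum g2 N.
Proof. intros H. unfold symsum. apply sum_eq. intros i Hi. apply H. lia. Qed.

Lemma symsum_plus g1 g2 N :
  symsum (fun n => g1 n + g2 n) N = symsum g1 N + symsum g2 N.
Proof. induction N as [|N IH]; [reflexivity|]. rewrite !symsum_S, IH. ring. Qed.

Lemma symsum_scal c g N : symsum (fun n => c * g n) N = c * symsum g N.
Proof. induction N as [|N IH]; [reflexivity|]. rewrite !symsum_S, IH. ring. Qed.

Lemma symsum_zero g N : (forall n, g n = 0) -> symsum g N = 0.
Proof.
  intros H. induction N as [|N IH]; [apply H|]. rewrite symsum_S, IH, !H. ring.
Qed.

Lemma symsum_le g1 g2 N : (forall n, g1 n <= g2 n) -> symsum g1 N <= symsum g2 N.
Proof.
  intros H. induction N as [|N IH]; [apply H|].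
  rewrite !symsum_S. specialize (H (- Z.of_nat (S N))%Z) as H1.
  specialize (H (Z.of_nat (S N))). lra.
Qed.

Lemma symsum_nonneg g N : (forall n, 0 <= g n) -> 0 <= symsum g N.
Proof.
  intros H. rewrite <- (symsum_zero (fun _ => 0) N) by reflexivity.
  apply symsum_le, H.
Qed.

Lemma symsum_abs g N : Rabs (symsum g N) <= symsum (fun n => Rabs (g n)) N.
Proof.
  induction N as [|N IH]; [rewrite !symsum_0; lra|].
  rewrite !symsum_S.
  eapply Rle_trans; [apply Rabs_triang|].
  eapply Rle_trans; [apply Rplus_le_compat_r; apply Rabs_triang|]. lra.
Qed.

Definition inb (N : nat) (n : Z) : bool := (- Z.of_nat N <=? n)%Z && (n <=? Z.of_nat N)%Z.

Lemma inb_true N n : (- Z.of_nat N <= n <= Z.of_nat N)%Z -> inb N n = true.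
Proof. intros. unfold inb. apply andb_true_iff. split; apply Z.leb_le; lia. Qed.

Lemma symsum_restrict g N M :
  (N <= M)%nat -> symsum (fun n => if inb N n then g n else 0) M = symsum g N.
Proof.
  intros HM. induction HM as [|M HM IH].
  - apply symsum_ext. intros n Hn. now rewrite inb_true.
  - rewrite symsum_S, IH. unfold inb.
    destruct (Z.leb_spec (- Z.of_nat N) (- Z.of_nat (S M))),
      (Z.leb_spec (- Z.of_nat (S M)) (Z.of_nat N)),
      (Z.leb_spec (- Z.of_nat N) (Z.of_nat (S M))),
      (Z.leb_spec (Z.of_nat (S M)) (Z.of_nat N)); cbn [andb]; try lia; ring.
Qed.

Lemma symsum_delta k x N :
  symsum (fun n => if Z.eqb n k then x else 0) N = if inb N k then x else 0.
Proof.
  induction N as [|N IH]; unfold inb in *.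
  - rewrite symsum_0.
    destruct (Z.eqb_spec 0 k), (Z.leb_spec (- Z.of_nat 0) k), (Z.leb_spec k (Z.of_nat 0));
      cbn [andb]; try lia; reflexivity.
  - rewrite symsum_S, IH.
    destruct (Z.eqb_spec (- Z.of_nat (S N)) k), (Z.eqb_spec (Z.of_nat (S N)) k),
      (Z.leb_spec (- Z.of_nat N) k), (Z.leb_spec k (Z.of_nat N)),
      (Z.leb_spec (- Z.of_nat (S N)) k), (Z.leb_spec k (Z.of_nat (S N)));
      cbn [andb]; try lia; ring.
Qed.

Lemma SQ_ext h1 h2 N : (forall a b, h1 a b = h2 a b) -> SQ h1 N = SQ h2 N.
Proof. intros H. unfold SQ. apply symsum_ext. intros. apply symsum_ext. auto. Qed.

Lemma SQ_plus h1 h2 N : SQ (fun a b => h1 a b + h2 a b) N = SQ h1 N + SQ h2 N.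
Proof.
  unfold SQ. rewrite <- symsum_plus. apply symsum_ext. intros. apply symsum_plus.
Qed.

Lemma SQ_le h1 h2 N : (forall a b, h1 a b <= h2 a b) -> SQ h1 N <= SQ h2 N.
Proof. intros H. unfold SQ. apply symsum_le. intros. apply symsum_le. auto. Qed.

Lemma SQ_abs h N : Rabs (SQ h N) <= SQ (fun a b => Rabs (h a b)) N.
Proof.
  unfold SQ. eapply Rle_trans; [apply symsum_abs|].
  apply symsum_le. intros. apply symsum_abs.
Qed.

Lemma SQ_product_le (c Bu Bv : R) (u v : Z -> R) N :
  0 <= c -> (forall n, 0 <= u n) -> (forall n, 0 <= v n) ->
  (forall N, symsum u N <= Bu) -> (forall N, symsum v N <= Bv) ->
  SQ (fun a b => c * u a * v b) N <= c * Bu * Bv.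
Proof.
  intros Hc Hu Hv HBu HBv.
  assert (Hsep : SQ (fun a b => c * u a * v b) N = c * symsum u N * symsum v N).
  { unfold SQ. rewrite (symsum_ext _ (fun a => (c * symsum v N) * u a) N).
    - rewrite symsum_scal. ring.
    - intros a _. rewrite symsum_scal. ring. }
  rewrite Hsep.
  assert (Su := symsum_nonneg u N Hu). assert (Sv := symsum_nonneg v N Hv).
  specialize (HBu N). specialize (HBv N).
  apply Rmult_le_compat; [apply Rmult_le_pos; lra|lra| |lra].
  apply Rmult_le_compat_l; lra.
Qed.

Definition cut_in (N : nat) (h : Z -> Z -> R) (a b : Z) : R :=
  if inb N a then (if inb N b then h a b else 0) else 0.

Lemma SQ_cut_in N M h : (N <= M)%nat -> SQ (cut_in N h) M = SQ h N.
Proof.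
  intros HM. unfold SQ, cut_in.
  rewrite <- (symsum_restrict _ N M HM). apply symsum_ext. intros a _.
  destruct (inb N a).
  - apply symsum_restrict, HM.
  - apply symsum_zero. reflexivity.
Qed.

Lemma SQ_converges h g B :
  (forall a b, Rabs (h a b) <= g a b) -> (forall N, SQ g N <= B) ->
  { l | Un_cv (SQ h) l }.
Proof.
  intros Hhg HB.
  assert (Hdiff : forall k N M, (N <= M)%nat ->
            SQ k M - SQ k N = SQ (fun a b => k a b - cut_in N k a b) M).
  { intros k N M HM. rewrite <- (SQ_cut_in N M k HM).
    rewrite <- (SQ_ext (fun a b => (k a b - cut_in N k a b) + cut_in N k a b) k M)
      by (intros; ring).
    rewrite SQ_plus. ring. }
  assert (Hout : forall N M, (N <= M)%nat -> Rabs (SQ h M - SQ h N) <= SQ g M - SQ g N).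
  { intros N M HM. rewrite !Hdiff by exact HM.
    eapply Rle_trans; [apply SQ_abs|]. apply SQ_le. intros a b. unfold cut_in.
    destruct (inb N a), (inb N b); rewrite ?Rminus_diag, ?Rminus_0_r, ?Rabs_R0;
      auto with real. }
  assert (Hgrow : Un_growing (SQ g)).
  { intros N. assert (H := Hout N (S N) ltac:(lia)).
    assert (H2 := Rabs_pos (SQ h (S N) - SQ h N)). lra. }
  assert (Hub : has_ub (SQ g)) by (exists B; intros x [i ->]; apply HB).
  destruct (growing_cv _ Hgrow Hub) as [lg Hlg].
  assert (Hc := CV_Cauchy _ (exist _ lg Hlg)).
  apply R_complete. intros eps Heps.
  destruct (Hc eps Heps) as [N0 HN0]. exists N0. intros n m Hn Hm.
  specialize (HN0 n m Hn Hm). unfold R_dist in *.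
  destruct (le_lt_dec n m) as [Hnm|Hnm].
  - specialize (Hout n m Hnm). rewrite Rabs_minus_sym.
    assert (H3 := Rle_abs (SQ g m - SQ g n)). rewrite Rabs_minus_sym in H3. lra.
  - specialize (Hout m n ltac:(lia)).
    assert (H3 := Rle_abs (SQ g n - SQ g m)). lra.
Qed.

Definition in_square (N : nat) (p : Z * Z) : Prop :=
  (- Z.of_nat N <= fst p <= Z.of_nat N)%Z /\ (- Z.of_nat N <= snd p <= Z.of_nat N)%Z.

Definition at_point (p : Z * Z) (a b : Z) : bool := Z.eqb a (fst p) && Z.eqb b (snd p).

Lemma at_point_eq p a b : at_point p a b = true -> (a, b) = p.
Proof.
  destruct p as [p1 p2]. unfold at_point. simpl.
  rewrite andb_true_iff, !Z.eqb_eq. intros [-> ->]. reflexivity.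
Qed.

Lemma SQ_point p x N :
  in_square N p -> SQ (fun a b => if at_point p a b then x else 0) N = x.
Proof.
  intros [H1 H2]. unfold SQ, at_point.
  transitivity (symsum (fun n => if Z.eqb n (fst p) then x else 0) N).
  2:{ rewrite symsum_delta, inb_true by exact H1. reflexivity. }
  apply symsum_ext. intros a _. destruct (Z.eqb a (fst p)); cbn [andb].
  - rewrite symsum_delta, inb_true by exact H2. reflexivity.
  - apply symsum_zero. reflexivity.
Qed.

Definition off_points (p q : Z * Z) (h : Z -> Z -> R) (a b : Z) : R :=
  if at_point p a b || at_point q a b then 0 else h a b.

Lemma SQ_two_points p q h N :
  p <> q -> in_square N p -> in_square N q ->
  SQ h N = h (fst p) (snd p) + h (fst q) (snd q) + SQ (off_points p q h) N.
Proof.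
  intros Hpq Hp Hq.
  rewrite <- (SQ_point p (h (fst p) (snd p)) N Hp), <- (SQ_point q (h (fst q) (snd q)) N Hq).
  rewrite <- !SQ_plus. apply SQ_ext. intros a b. unfold off_points.
  destruct (at_point p a b) eqn:Ep, (at_point q a b) eqn:Eq; cbn [orb].
  - apply at_point_eq in Ep. apply at_point_eq in Eq. congruence.
  - apply at_point_eq in Ep. subst p. simpl. ring.
  - apply at_point_eq in Eq. subst q. simpl. ring.
  - ring.
Qed.

Lemma sqrt_le_sq x a : 0 <= a -> x <= a * a -> sqrt x <= a.
Proof. intros Ha H. rewrite <- (sqrt_square a Ha). apply sqrt_le_1_alt, H. Qed.

Lemma sqrt_ge_sq x a : 0 <= a -> a * a <= x -> a <= sqrt x.
Proof. intros Ha H. rewrite <- (sqrt_square a Ha). apply sqrt_le_1_alt, H. Qed.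

Lemma Cnorm_nonneg z : 0 <= Cnorm z.
Proof. apply sqrt_pos. Qed.

Lemma Cnorm_zero : Cnorm (0, 0) = 0.
Proof. unfold Cnorm. cbn [fst snd]. replace (0 ^ 2 + 0 ^ 2) with 0 by ring. apply sqrt_0. Qed.

Lemma Cnorm_fst z : Rabs (fst z) <= Cnorm z.
Proof.
  apply sqrt_ge_sq; [apply Rabs_pos|].
  rewrite <- Rabs_mult, Rabs_pos_eq by nra. nra.
Qed.

Lemma Cnorm_snd z : Rabs (snd z) <= Cnorm z.
Proof.
  apply sqrt_ge_sq; [apply Rabs_pos|].
  rewrite <- Rabs_mult, Rabs_pos_eq by nra. nra.
Qed.

(* Triangle inequality, from Cauchy-Schwarz in R^2. *)
Lemma Cnorm_triangle z w : Cnorm (Cadd z w) <= Cnorm z + Cnorm w.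
Proof.
  destruct z as [a b], w as [c d]. unfold Cnorm, Cadd. cbn [fst snd].
  assert (E1 := sqrt_sqrt (a ^ 2 + b ^ 2) ltac:(nra)).
  assert (E2 := sqrt_sqrt (c ^ 2 + d ^ 2) ltac:(nra)).
  assert (P1 := sqrt_pos (a ^ 2 + b ^ 2)). assert (P2 := sqrt_pos (c ^ 2 + d ^ 2)).
  set (sA := sqrt (a ^ 2 + b ^ 2)) in *. set (sB := sqrt (c ^ 2 + d ^ 2)) in *.
  apply sqrt_le_sq; [lra|].
  assert (Hcs : (a * c + b * d) * (a * c + b * d) <= (sA * sB) * (sA * sB)).
  { replace ((sA * sB) * (sA * sB)) with ((sA * sA) * (sB * sB)) by ring.
    rewrite E1, E2. assert (Hlag := pow2_ge_0 (a * d - b * c)). nra. }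
  assert (Hp : 0 <= sA * sB) by nra.
  assert (a * c + b * d <= sA * sB) by nra.
  nra.
Qed.

Lemma Cnorm_double z : Cnorm (Cadd z z) = 2 * Cnorm z.
Proof.
  unfold Cnorm, Cadd. cbn [fst snd].
  replace ((fst z + fst z) ^ 2 + (snd z + snd z) ^ 2)
    with ((2 * 2) * (fst z ^ 2 + snd z ^ 2)) by ring.
  rewrite sqrt_mult_alt, sqrt_square by lra. reflexivity.
Qed.

Lemma Cnorm_sub_sym z w : Cnorm (Csub z w) = Cnorm (Csub w z).
Proof. unfold Cnorm, Csub. cbn [fst snd]. f_equal. ring. Qed.

Lemma Cnorm_reverse z w : Cnorm z - Cnorm (Csub z w) <= Cnorm w.
Proof.
  assert (Hz : z = Cadd w (Csub z w)).
  { destruct z, w. unfold Cadd, Csub. cbn [fst snd]. f_equal; ring. }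
  assert (H := Cnorm_triangle w (Csub z w)). rewrite <- Hz in H. lra.
Qed.

Lemma Cnorm_Cexp z : Cnorm (Cexp z) = exp (fst z).
Proof.
  unfold Cnorm, Cexp. cbn [fst snd].
  replace ((exp (fst z) * cos (snd z)) ^ 2 + (exp (fst z) * sin (snd z)) ^ 2)
    with (exp (fst z) ^ 2 * (Rsqr (sin (snd z)) + Rsqr (cos (snd z)))) by (unfold Rsqr; ring).
  rewrite sin2_cos2, Rmult_1_r. apply sqrt_pow2. left. apply exp_pos.
Qed.

(* Square partial sums of a complex double series; [theta_partial a b Zv t N]
   is by definition [SQC (theta_term a b Zv t) N]. *)
Definition SQC (f : Z -> Z -> Cx) (N : nat) : Cx :=
  (SQ (fun a b => fst (f a b)) N, SQ (fun a b => snd (f a b)) N).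

Lemma symsum_Cnorm (f : Z -> Cx) N :
  Cnorm (symsum (fun n => fst (f n)) N, symsum (fun n => snd (f n)) N)
  <= symsum (fun n => Cnorm (f n)) N.
Proof.
  induction N as [|N IH]; [rewrite !symsum_0; unfold Cnorm; simpl; lra|].
  rewrite !symsum_S.
  set (S0 := (symsum (fun n => fst (f n)) N, symsum (fun n => snd (f n)) N)).
  assert (T1 := Cnorm_triangle S0 (f (- Z.of_nat (S N))%Z)).
  assert (T2 := Cnorm_triangle (Cadd S0 (f (- Z.of_nat (S N))%Z)) (f (Z.of_nat (S N)))).
  unfold Cadd at 1 2 in T2. unfold S0, Cadd in T1, T2. cbn [fst snd] in T1, T2. lra.
Qed.

Lemma SQC_Cnorm f N : Cnorm (SQC f N) <= SQ (fun a b => Cnorm (f a b)) N.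
Proof.
  unfold SQC, SQ.
  eapply Rle_trans;
    [apply (symsum_Cnorm (fun a => (symsum (fun b => fst (f a b)) N,
                                     symsum (fun b => snd (f a b)) N)))|].
  apply symsum_le. intros a. apply (symsum_Cnorm (f a)).
Qed.

Lemma SQC_converges f g B :
  (forall a b, Cnorm (f a b) <= g a b) -> (forall N, SQ g N <= B) ->
  exists w : Cx, Un_cv (fun N => fst (SQC f N)) (fst w) /\
                 Un_cv (fun N => snd (SQC f N)) (snd w).
Proof.
  intros Hfg HB.
  destruct (SQ_converges (fun a b => fst (f a b)) g B) as [l1 Hl1]; auto.
  { intros a b. eapply Rle_trans; [apply Cnorm_fst|apply Hfg]. }
  destruct (SQ_converges (fun a b => snd (f a b)) g B) as [l2 Hl2]; auto.
  { intros a b. eapply Rle_trans; [apply Cnorm_snd|apply Hfg]. }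
  exists (l1, l2). split; assumption.
Qed.

Lemma Cnorm_limit_le (x y : nat -> R) (w z : Cx) (r : R) (N0 : nat) :
  Un_cv x (fst w) -> Un_cv y (snd w) ->
  (forall N, (N0 <= N)%nat -> Cnorm (Csub (x N, y N) z) <= r) ->
  Cnorm (Csub w z) <= r.
Proof.
  intros Hx Hy Hr.
  assert (Hr0 : 0 <= r) by (eapply Rle_trans; [apply Cnorm_nonneg|apply (Hr N0); lia]).
  set (d := fun (u : nat -> R) (l : R) n => u (n + N0)%nat - l).
  assert (Hd : forall u l c, Un_cv u l -> Un_cv (d u c) (l - c)).
  { intros u l c Hu. apply CV_minus; [|intros e He; exists O; intros; unfold R_dist;
      rewrite Rminus_diag, Rabs_R0; lra].
    intros e He. destruct (Hu e He) as [M HM]. exists M. intros n Hn. apply HM. lia. }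
  assert (Hsq := CV_plus _ _ _ _ (CV_mult _ _ _ _ (Hd x (fst w) (fst z) Hx) (Hd x (fst w) (fst z) Hx))
                              (CV_mult _ _ _ _ (Hd y (snd w) (snd z) Hy) (Hd y (snd w) (snd z) Hy))).
  apply sqrt_le_sq; [exact Hr0|]. unfold Csub. cbn [fst snd].
  replace ((fst w - fst z) ^ 2 + (snd w - snd z) ^ 2) with
    ((fst w - fst z) * (fst w - fst z) + (snd w - snd z) * (snd w - snd z)) by ring.
  eapply Rle_cv_lim; [|exact Hsq|intros e He; exists O; intros; unfold R_dist;
                          rewrite Rminus_diag, Rabs_R0; exact He].
  intros n. cbv beta. unfold d.
  assert (Hn := Hr (n + N0)%nat ltac:(lia)). unfold Cnorm, Csub in Hn. cbn [fst snd] in Hn.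
  assert (Hs := sqrt_pos ((x (n + N0)%nat - fst z) ^ 2 + (y (n + N0)%nat - snd z) ^ 2)).
  assert (Hss := sqrt_sqrt ((x (n + N0)%nat - fst z) ^ 2 + (y (n + N0)%nat - snd z) ^ 2)
                   (Rplus_le_le_0_compat _ _ (pow2_ge_0 _) (pow2_ge_0 _))).
  set (s := sqrt _) in Hs, Hss, Hn.
  assert (Hsr : s * s <= r * r) by (apply Rmult_le_compat; lra).
  rewrite Hss in Hsr. lra.
Qed.

Section TwoDominantTerms.

Variables (f : Z -> Z -> Cx) (g : Z -> Z -> R) (B : R) (p q : Z * Z).
Hypothesis f_dominated : forall a b, Cnorm (f a b) <= g a b.
Hypothesis g_mass : forall N, SQ g N <= B.
Hypothesis p_neq_q : p <> q.
Hypothesis f_pq : f (fst q) (snd q) = f (fst p) (snd p).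

Let z := f (fst p) (snd p).

(* Once both points are in the square, the partial sum differs from 2z by at
   most the mass of g off these points, which is at most B - 2|z|. *)
Lemma two_points_tail N :
  in_square N p -> in_square N q -> Cnorm (Csub (SQC f N) (Cadd z z)) <= B - 2 * Cnorm z.
Proof.
  intros Hp Hq.
  set (off := fun a b => (off_points p q (fun a b => fst (f a b)) a b,
                          off_points p q (fun a b => snd (f a b)) a b)).
  assert (Hsplit : Csub (SQC f N) (Cadd z z) = SQC off N).
  { unfold SQC, Csub, Cadd, off. cbn [fst snd].
    rewrite (SQ_two_points p q (fun a b => fst (f a b)) N p_neq_q Hp Hq) at 1.
    rewrite (SQ_two_points p q (fun a b => snd (f a b)) N p_neq_q Hp Hq) at 1.
    rewrite f_pq. fold z. f_equal; ring_simplify; reflexivity. }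
  assert (Hoff : SQ (fun a b => Cnorm (off a b)) N <= SQ (off_points p q g) N).
  { apply SQ_le. intros a b. unfold off, off_points.
    destruct (at_point p a b || at_point q a b).
    - rewrite Cnorm_zero. lra.
    - apply f_dominated. }
  assert (Hg := SQ_two_points p q g N p_neq_q Hp Hq).
  assert (Hgp := f_dominated (fst p) (snd p)).
  assert (Hgq := f_dominated (fst q) (snd q)). rewrite f_pq in Hgq.
  assert (HB := g_mass N).
  rewrite Hsplit. eapply Rle_trans; [apply SQC_Cnorm|]. fold z in Hgp, Hgq. lra.
Qed.

Lemma two_dominant_terms (N0 : nat) :
  in_square N0 p -> in_square N0 q ->
  exists w : Cx, Un_cv (fun N => fst (SQC f N)) (fst w) /\
                 Un_cv (fun N => snd (SQC f N)) (snd w) /\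
                 4 * Cnorm z - B <= Cnorm w.
Proof.
  intros Hp Hq.
  destruct (SQC_converges f g B f_dominated g_mass) as [w [Hw1 Hw2]].
  exists w. split; [exact Hw1|]. split; [exact Hw2|].
  assert (Hlim : Cnorm (Csub w (Cadd z z)) <= B - 2 * Cnorm z).
  { apply (Cnorm_limit_le _ _ w (Cadd z z) _ N0 Hw1 Hw2).
    intros N HN. apply two_points_tail; unfold in_square in *; lia. }
  assert (Hrev := Cnorm_reverse (Cadd z z) w).
  rewrite Cnorm_double, Cnorm_sub_sym in Hrev. lra.
Qed.

End TwoDominantTerms.

Lemma exp_mono x y : x <= y -> exp x <= exp y.
Proof. intros [H | ->]; [left; apply exp_increasing, H|lra]. Qed.

Lemma exp_neg_lt_1 c : 0 < c -> exp (- c) < 1.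
Proof. intros Hc. rewrite <- exp_0. apply exp_increasing. lra. Qed.

Lemma exp_nat c k : exp (- c * INR k) = exp (- c) ^ k.
Proof.
  induction k as [|k IH]; [simpl; rewrite Rmult_0_r; apply exp_0|].
  rewrite S_INR, <- tech_pow_Rmult, <- IH, <- exp_plus. f_equal. ring.
Qed.

Definition geom_int (c : R) (n : Z) : R := exp (- c * Rabs (IZR n)).
Definition geom_half (c : R) (n : Z) : R := exp (- c * (Rabs (IZR n + 1/2) - 1/2)).

Definition int_mass (y : R) : R := (1 + exp (- (PI * y / 2))) / (1 - exp (- (PI * y / 2))).
Definition half_mass (y : R) : R := 2 / (1 - exp (- (PI * y))).

Lemma geom_int_sum c N : 0 < c ->
  symsum (geom_int c) N = (1 + exp (- c) - 2 * exp (- c) ^ (S N)) / (1 - exp (- c)).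
Proof.
  intros Hc. assert (Hr := exp_neg_lt_1 c Hc).
  induction N as [|N IH].
  - rewrite symsum_0. unfold geom_int. rewrite Rabs_R0, Rmult_0_r, exp_0. field. lra.
  - rewrite symsum_S, IH. unfold geom_int.
    rewrite opp_IZR, Rabs_Ropp, <- INR_IZR_INZ, Rabs_pos_eq by apply pos_INR.
    rewrite exp_nat. simpl. field. lra.
Qed.

Lemma geom_int_mass c N : 0 < c -> symsum (geom_int c) N <= (1 + exp (- c)) / (1 - exp (- c)).
Proof.
  intros Hc. rewrite geom_int_sum by exact Hc.
  assert (Hr := exp_neg_lt_1 c Hc).
  assert (Hp : 0 <= exp (- c) ^ S N) by (apply pow_le; left; apply exp_pos).
  unfold Rdiv. apply Rmult_le_compat_r; [left; apply Rinv_0_lt_compat|]; lra.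
Qed.

Lemma geom_half_sum c N : 0 < c ->
  symsum (geom_half c) N = (2 - exp (- c) ^ N - exp (- c) ^ (S N)) / (1 - exp (- c)).
Proof.
  intros Hc. assert (Hr := exp_neg_lt_1 c Hc).
  induction N as [|N IH].
  - rewrite symsum_0. unfold geom_half. simpl.
    rewrite Rabs_pos_eq by lra. replace (- c * (0 + 1 / 2 - 1 / 2)) with 0 by ring.
    rewrite exp_0. field. lra.
  - rewrite symsum_S, IH. unfold geom_half.
    rewrite opp_IZR, <- INR_IZR_INZ.
    rewrite (Rabs_pos_eq (INR (S N) + 1/2)) by (assert (H := pos_INR (S N)); lra).
    rewrite Rabs_left1 by (rewrite S_INR; assert (H := pos_INR N); lra).
    replace (- (- INR (S N) + 1 / 2) - 1 / 2) with (INR N) by (rewrite S_INR; lra).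
    replace (INR (S N) + 1 / 2 - 1 / 2) with (INR (S N)) by ring.
    rewrite !exp_nat. simpl. field. lra.
Qed.

Lemma geom_half_mass c N : 0 < c -> symsum (geom_half c) N <= 2 / (1 - exp (- c)).
Proof.
  intros Hc. rewrite geom_half_sum by exact Hc.
  assert (Hr := exp_neg_lt_1 c Hc).
  assert (Hp : 0 <= exp (- c) ^ S N) by (apply pow_le; left; apply exp_pos).
  assert (Hp' : 0 <= exp (- c) ^ N) by (apply pow_le; left; apply exp_pos).
  unfold Rdiv. apply Rmult_le_compat_r; [left; apply Rinv_0_lt_compat|]; lra.
Qed.

Definition qform (t : Sym2) (x1 x2 : R) : R :=
  x1 * x1 * Im1 t + 2 * x1 * x2 * Im12 t + x2 * x2 * Im2 t.

Lemma theta_term_norm a b t n1 n2 :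
  Cnorm (theta_term a b C2zero t n1 n2) = exp (- PI * qform t (IZR n1 + fst a) (IZR n2 + snd a)).
Proof.
  unfold theta_term. rewrite Cnorm_Cexp. f_equal.
  unfold Cmul, Cscal, Cadd, Ci, CofR, C2zero, qform, Im1, Im12, Im2. simpl. field.
Qed.

Lemma theta_term_0_normalized a b t :
  Cnorm (theta_term a b C2zero t 0 0) * exp (PI * aImA a t) = 1.
Proof.
  rewrite theta_term_norm, <- exp_plus, <- exp_0. f_equal.
  unfold qform, aImA. simpl. ring.
Qed.

Lemma theta_term_first_pair b2 t :
  theta_term (1/2, 0) (0, b2) C2zero t (-1) 0 = theta_term (1/2, 0) (0, b2) C2zero t 0 0.
Proof.
  unfold theta_term. simpl fst; simpl snd.
  replace (IZR (-1) + 1/2) with (- (1/2)) by lra.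
  replace (IZR 0 + 1/2) with (1/2) by lra.
  f_equal. unfold Cmul, Cscal, Cadd, CofR, C2zero. simpl. f_equal; ring.
Qed.

Lemma theta_term_second_pair b1 t :
  theta_term (0, 1/2) (b1, 0) C2zero t 0 (-1) = theta_term (0, 1/2) (b1, 0) C2zero t 0 0.
Proof.
  unfold theta_term. simpl fst; simpl snd.
  replace (IZR (-1) + 1/2) with (- (1/2)) by lra.
  replace (IZR 0 + 1/2) with (1/2) by lra.
  f_equal. unfold Cmul, Cscal, Cadd, CofR, C2zero. simpl. f_equal; ring.
Qed.

Lemma PI_gt_3 : 3 < PI.
Proof. assert (H := PI2_3_2). lra. Qed.

(* From Machin's formula pi/4 = 2 atan(1/3) + atan(1/7), three terms. *)
Lemma PI_lt_16_5 : PI < 16/5.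
Proof.
  assert (H := proj2 (PI_2_3_7_ineq 1)).
  unfold tg_alt, PI_2_3_7_tg, Ratan_seq in H. simpl in H. lra.
Qed.

Lemma exp_ge_pow n x : (0 < n)%nat -> 0 <= 1 + x / INR n -> (1 + x / INR n) ^ n <= exp x.
Proof.
  intros Hn H.
  assert (HnR : 0 < INR n) by (apply lt_0_INR; lia).
  replace x with (INR n * (x / INR n)) at 2 by (field; lra).
  replace (exp (INR n * (x / INR n))) with (exp (x / INR n) ^ n).
  - apply pow_incr. split; [exact H|]. apply exp_ineq1_le.
  - transitivity (exp (- - (x / INR n) * INR n)); [|f_equal; ring].
    rewrite exp_nat, Ropp_involutive. reflexivity.
Qed.

Lemma exp_2_ge_7 : 7 <= exp 2.
Proof.
  eapply Rle_trans; [|apply (exp_ge_pow 64); [lia|]];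
    replace (INR 64) with 64 by (simpl; lra); simpl; lra.
Qed.

Lemma exp_3_ge_18 : 18 <= exp 3.
Proof.
  eapply Rle_trans; [|apply (exp_ge_pow 64); [lia|]];
    replace (INR 64) with 64 by (simpl; lra); simpl; lra.
Qed.

Lemma exp_neg_le x x0 L : 0 < L -> L <= exp x0 -> x0 <= x -> exp (- x) <= / L.
Proof.
  intros HL H Hx. rewrite exp_Ropp. apply Rinv_le_contravar; [exact HL|].
  eapply Rle_trans; [exact H|apply exp_mono, Hx].
Qed.

(* exp(-(1 + x)) >= (1 - x) / 3 and exp(-(2 + x)) >= (1 - x) / 9, from e <= 3. *)
Lemma exp_neg_ge_1 x : 0 <= x -> (1 - x) / 3 <= exp (- (1 + x)).
Proof.
  intros Hx. rewrite Ropp_plus_distr, exp_plus.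
  assert (H1 : / 3 <= exp (Ropp 1)).
  { rewrite exp_Ropp. apply Rinv_le_contravar; [apply exp_pos|apply exp_le_3]. }
  assert (H2 := exp_ineq1_le (- x)). assert (H3 := exp_pos (- x)). unfold Rdiv. nra.
Qed.

Lemma exp_neg_ge_2 x : 0 <= x -> (1 - x) / 9 <= exp (- (2 + x)).
Proof.
  intros Hx. replace (- (2 + x)) with (Ropp 1 + - (1 + x)) by ring. rewrite exp_plus.
  assert (H1 := exp_neg_ge_1 0 ltac:(lra)). rewrite Rplus_0_r in H1.
  assert (H2 := exp_neg_ge_1 x Hx). assert (H3 := exp_pos (- (1 + x))).
  unfold Rdiv in *. nra.
Qed.

Lemma ratio_le c y A : 0 < y -> 0 <= A -> 0 <= c -> c * c <= A * A * y -> c / sqrt y <= A.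
Proof.
  intros Hy HA Hc H. assert (Hs := sqrt_lt_R0 y Hy).
  apply Rmult_le_reg_r with (sqrt y); [exact Hs|].
  unfold Rdiv. rewrite Rmult_assoc, Rinv_l, Rmult_1_r by lra.
  rewrite <- (sqrt_square c Hc), <- (sqrt_square A HA), <- sqrt_mult_alt by nra.
  apply sqrt_le_1_alt. exact H.
Qed.

Lemma ratio_ge c y A : 0 < y -> 0 <= A -> 0 <= c -> A * A * y <= c * c -> A <= c / sqrt y.
Proof.
  intros Hy HA Hc H. assert (Hs := sqrt_lt_R0 y Hy).
  apply Rmult_le_reg_r with (sqrt y); [exact Hs|].
  unfold Rdiv. rewrite Rmult_assoc, Rinv_l, Rmult_1_r by lra.
  rewrite <- (sqrt_square c Hc), <- (sqrt_square A HA), <- sqrt_mult_alt by nra.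
  apply sqrt_le_1_alt. exact H.
Qed.

Lemma ratio_nonneg c y : 0 < y -> 0 <= c -> 0 <= c / sqrt y.
Proof.
  intros Hy Hc. unfold Rdiv. apply Rmult_le_pos; [exact Hc|].
  left. apply Rinv_0_lt_compat, sqrt_lt_R0, Hy.
Qed.

Lemma theta_bound_le_of y1 y2 X0 Y0 Z0 :
  0 < y1 -> 0 < y2 -> 0 <= X0 -> 0 <= Y0 ->
  X0 <= (1 + sqrt 6 / sqrt y1) * exp (- PI * y1 / 6) ->
  Y0 <= (1 + 2 / sqrt y2) * exp (- PI * y2 / 4) ->
  Z0 <= (2 + sqrt 2 / sqrt y2) * exp (- PI * y2 / 2) ->
  theta_bound y1 y2 <= 4 - (1 + X0) * (2 + Y0) - (1 + Z0).
Proof.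
  intros H1 H2 HX0 HY0 HX HY HZ. unfold theta_bound.
  assert (Hr := ratio_nonneg (sqrt 2) y2 H2 (sqrt_pos 2)).
  assert (HE := exp_pos (- PI * y2 / 2)). assert (HQ := exp_pos (- 2 * PI * y1)).
  assert (HP := exp_pos (- PI * y2)).
  assert (HW : 0 <= (1 + (1 + sqrt 2 / sqrt y2) * exp (- PI * y2 / 2)) * exp (- 2 * PI * y1))
    by (apply Rmult_le_pos; nra).
  assert ((1 + X0) * (2 + Y0) <= (1 + (1 + sqrt 6 / sqrt y1) * exp (- PI * y1 / 6))
                                  * (2 + (1 + 2 / sqrt y2) * exp (- PI * y2 / 4)))
    by (apply Rmult_le_compat; lra).
  lra.
Qed.

Lemma theta_bound_ge_of y1 y2 X1 Y1 Z1 P1 V1 Q1 :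
  0 < y1 -> 0 < y2 ->
  (1 + sqrt 6 / sqrt y1) * exp (- PI * y1 / 6) <= X1 ->
  (1 + 2 / sqrt y2) * exp (- PI * y2 / 4) <= Y1 ->
  (2 + sqrt 2 / sqrt y2) * exp (- PI * y2 / 2) <= Z1 ->
  exp (- PI * y2) <= P1 ->
  (1 + sqrt 2 / sqrt y2) * exp (- PI * y2 / 2) <= V1 ->
  exp (- 2 * PI * y1) <= Q1 ->
  4 - (1 + X1) * (2 + Y1) - (1 + Z1) - P1 - (1 + V1) * Q1 <= theta_bound y1 y2.
Proof.
  intros H1 H2 HX HY HZ HP HV HQ. unfold theta_bound.
  assert (R1 := ratio_nonneg (sqrt 6) y1 H1 (sqrt_pos 6)).
  assert (R2 := ratio_nonneg 2 y2 H2 ltac:(lra)).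
  assert (R3 := ratio_nonneg (sqrt 2) y2 H2 (sqrt_pos 2)).
  assert (E1 := exp_pos (- PI * y1 / 6)). assert (E2 := exp_pos (- PI * y2 / 4)).
  assert (E3 := exp_pos (- PI * y2 / 2)). assert (E5 := exp_pos (- 2 * PI * y1)).
  assert (HXY : (1 + (1 + sqrt 6 / sqrt y1) * exp (- PI * y1 / 6))
                * (2 + (1 + 2 / sqrt y2) * exp (- PI * y2 / 4)) <= (1 + X1) * (2 + Y1))
    by (apply Rmult_le_compat; nra).
  assert (HVQ : (1 + (1 + sqrt 2 / sqrt y2) * exp (- PI * y2 / 2)) * exp (- 2 * PI * y1)
                <= (1 + V1) * Q1)
    by (apply Rmult_le_compat; nra).
  lra.
Qed.

Lemma theta_bound_le_1 y1 y2 : 0 < y1 -> 0 < y2 -> theta_bound y1 y2 <= 1.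
Proof.
  intros H1 H2.
  assert (H := theta_bound_le_of y1 y2 0 0 0 H1 H2 ltac:(lra) ltac:(lra)).
  assert (R1 := ratio_nonneg (sqrt 6) y1 H1 (sqrt_pos 6)).
  assert (R2 := ratio_nonneg 2 y2 H2 ltac:(lra)).
  assert (R3 := ratio_nonneg (sqrt 2) y2 H2 (sqrt_pos 2)).
  assert (E1 := exp_pos (- PI * y1 / 6)). assert (E2 := exp_pos (- PI * y2 / 4)).
  assert (E3 := exp_pos (- PI * y2 / 2)).
  enough (theta_bound y1 y2 <= 4 - (1 + 0) * (2 + 0) - (1 + 0)) by lra.
  apply H; apply Rmult_le_pos; lra.
Qed.

(* For Im tau_1 <= 4/3 the first correction factor alone makes the bound negative. *)
Lemma theta_bound_nonpos_first y1 y2 : 0 < y1 -> y1 <= 4/3 -> 0 < y2 -> theta_bound y1 y2 <= 0.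
Proof.
  intros H1 H1' H2.
  assert (Hr : 2 <= sqrt 6 / sqrt y1).
  { apply ratio_ge; try lra; [apply sqrt_pos|]. rewrite sqrt_sqrt; lra. }
  assert (He : / 3 <= exp (- PI * y1 / 6)).
  { assert (H := exp_neg_ge_1 0 ltac:(lra)).
    apply Rle_trans with (exp (- (1 + 0))); [lra|apply exp_mono].
    assert (Hpi := PI_4). assert (Hpi0 := PI_RGT_0). nra. }
  assert (HX : 1 <= (1 + sqrt 6 / sqrt y1) * exp (- PI * y1 / 6)).
  { apply Rle_trans with ((1 + 2) * / 3); [lra|]. apply Rmult_le_compat; lra. }
  assert (R2 := ratio_nonneg 2 y1 H1 ltac:(lra)).
  assert (R3 := ratio_nonneg (sqrt 2) y1 H1 (sqrt_pos 2)).
  assert (E2 := exp_pos (- PI * y2 / 4)). assert (E3 := exp_pos (- PI * y2 / 2)).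
  assert (R4 := ratio_nonneg 2 y2 H2 ltac:(lra)).
  assert (R5 := ratio_nonneg (sqrt 2) y2 H2 (sqrt_pos 2)).
  assert (H := theta_bound_le_of y1 y2 1 0 0 H1 H2 ltac:(lra) ltac:(lra) HX
                 ltac:(apply Rmult_le_pos; lra) ltac:(apply Rmult_le_pos; lra)).
  lra.
Qed.

(* With the arguments exchanged, for Im tau_1 <= 4/3 the second and third
   correction factors together make the bound negative. *)
Lemma theta_bound_nonpos_second y1 y2 : 0 < y1 -> y1 <= 4/3 -> 0 < y2 -> theta_bound y2 y1 <= 0.
Proof.
  intros H1 H1' H2.
  assert (Hpi := PI_lt_16_5). assert (Hpi0 := PI_RGT_0).
  assert (HY : 84/100 <= (1 + 2 / sqrt y1) * exp (- PI * y1 / 4)).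
  { assert (Hr : 17/10 <= 2 / sqrt y1) by (apply ratio_ge; lra).
    assert (He : (1 - 1/15) / 3 <= exp (- PI * y1 / 4)).
    { eapply Rle_trans; [apply exp_neg_ge_1; lra|]. apply exp_mono. nra. }
    apply Rle_trans with ((1 + 17/10) * ((1 - 1/15) / 3)); [lra|].
    apply Rmult_le_compat; lra. }
  assert (HZ : 3/10 <= (2 + sqrt 2 / sqrt y1) * exp (- PI * y1 / 2)).
  { assert (Hr : 6/5 <= sqrt 2 / sqrt y1).
    { apply ratio_ge; try lra; [apply sqrt_pos|]. rewrite sqrt_sqrt; lra. }
    assert (He : (1 - 2/15) / 9 <= exp (- PI * y1 / 2)).
    { eapply Rle_trans; [apply exp_neg_ge_2; lra|]. apply exp_mono. nra. }
    apply Rle_trans with ((2 + 6/5) * ((1 - 2/15) / 9)); [lra|].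
    apply Rmult_le_compat; lra. }
  assert (R1 := ratio_nonneg (sqrt 6) y2 H2 (sqrt_pos 6)).
  assert (E1 := exp_pos (- PI * y2 / 6)).
  assert (H := theta_bound_le_of y2 y1 0 (84/100) (3/10) H2 H1 ltac:(lra) ltac:(lra)
                 ltac:(apply Rmult_le_pos; lra) HY HZ).
  lra.
Qed.

Lemma theta_bound_pos y1 y2 : 4 <= y1 -> y1 <= y2 -> 0 < theta_bound y1 y2.
Proof.
  intros H1 H2.
  assert (Hpi := PI_gt_3).
  assert (L2 := exp_2_ge_7). assert (L3 := exp_3_ge_18).
  assert (L6 : 324 <= exp 6) by (replace 6 with (3 + 3) by ring; rewrite exp_plus; nra).
  assert (L12 : 100000 <= exp 12) by (replace 12 with (6 + 6) by ring; rewrite exp_plus; nra).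
  assert (E1 : exp (- PI * y1 / 6) <= / 7).
  { replace (- PI * y1 / 6) with (- (PI * y1 / 6)) by field. apply (exp_neg_le _ 2); nra. }
  assert (E2 : exp (- PI * y2 / 4) <= / 18).
  { replace (- PI * y2 / 4) with (- (PI * y2 / 4)) by field. apply (exp_neg_le _ 3); nra. }
  assert (E3 : exp (- PI * y2 / 2) <= / 324).
  { replace (- PI * y2 / 2) with (- (PI * y2 / 2)) by field. apply (exp_neg_le _ 6); nra. }
  assert (E4 : exp (- PI * y2) <= / 100000).
  { replace (- PI * y2) with (- (PI * y2)) by ring. apply (exp_neg_le _ 12); nra. }
  assert (E5 : exp (- 2 * PI * y1) <= / 100000).
  { replace (- 2 * PI * y1) with (- (2 * PI * y1)) by ring. apply (exp_neg_le _ 12); nra. }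
  assert (R1 : sqrt 6 / sqrt y1 <= 1225/1000).
  { apply ratio_le; try lra; [apply sqrt_pos|]. rewrite sqrt_sqrt; lra. }
  assert (R2 : 2 / sqrt y2 <= 1) by (apply ratio_le; lra).
  assert (R3 : sqrt 2 / sqrt y2 <= 1).
  { apply ratio_le; try lra; [apply sqrt_pos|]. rewrite sqrt_sqrt; lra. }
  assert (N1 := ratio_nonneg (sqrt 6) y1 ltac:(lra) (sqrt_pos 6)).
  assert (N2 := ratio_nonneg 2 y2 ltac:(lra) ltac:(lra)).
  assert (N3 := ratio_nonneg (sqrt 2) y2 ltac:(lra) (sqrt_pos 2)).
  assert (P1 := exp_pos (- PI * y1 / 6)). assert (P2 := exp_pos (- PI * y2 / 4)).
  assert (P3 := exp_pos (- PI * y2 / 2)).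
  assert (H := theta_bound_ge_of y1 y2 ((1 + 1225/1000) * / 7) ((1 + 1) * / 18)
                 ((2 + 1) * / 324) (/ 100000) ((1 + 1) * / 324) (/ 100000)
                 ltac:(lra) ltac:(lra)
                 ltac:(apply Rmult_le_compat; lra) ltac:(apply Rmult_le_compat; lra)
                 ltac:(apply Rmult_le_compat; lra) E4
                 ltac:(apply Rmult_le_compat; lra) E5).
  lra.
Qed.

Lemma div_le_of a b s : 0 < s -> b <= a * s -> b / s <= a.
Proof.
  intros Hs H. apply Rmult_le_reg_r with s; [exact Hs|].
  unfold Rdiv. rewrite Rmult_assoc, Rinv_l, Rmult_1_r by lra. exact H.
Qed.

Lemma mass_product_le_3 y : 4/3 < y -> half_mass y * int_mass y <= 3.
Proof.
  intros Hy. assert (Hpi := PI_gt_3).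
  assert (L2 := exp_2_ge_7).
  assert (L4 : 49 <= exp 4) by (replace 4 with (2 + 2) by ring; rewrite exp_plus; nra).
  assert (Hr : exp (- (PI * y)) <= / 49) by (apply (exp_neg_le _ 4); nra).
  assert (Hs : exp (- (PI * y / 2)) <= / 7) by (apply (exp_neg_le _ 2); nra).
  assert (Hr0 := exp_pos (- (PI * y))). assert (Hs0 := exp_pos (- (PI * y / 2))).
  assert (Hh : half_mass y <= 49/24) by (apply div_le_of; lra).
  assert (Hi : int_mass y <= 4/3) by (apply div_le_of; lra).
  assert (Hh0 : 0 <= half_mass y) by (left; apply Rdiv_lt_0_compat; lra).
  assert (Hi0 : 0 <= int_mass y) by (left; apply Rdiv_lt_0_compat; lra).
  apply Rle_trans with (49/24 * (4/3)); [apply Rmult_le_compat|]; lra.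
Qed.

Lemma half_int_abs n : Rabs (IZR n + 1/2) = 1/2 \/ Rabs (IZR n + 1/2) >= 3/2.
Proof.
  assert (H : (n = 0 \/ n = -1 \/ 1 <= n \/ n <= -2)%Z) by lia.
  destruct H as [->|[->|[H|H]]].
  - left. rewrite Rabs_pos_eq; lra.
  - left. rewrite Rabs_left; lra.
  - right. apply IZR_le in H. rewrite Rabs_pos_eq; lra.
  - right. apply IZR_le in H. rewrite Rabs_left; lra.
Qed.

Lemma int_abs n : Rabs (IZR n) = 0 \/ Rabs (IZR n) = 1 \/ Rabs (IZR n) >= 2.
Proof.
  assert (H : (n = 0 \/ n = -1 \/ n = 1 \/ 2 <= n \/ n <= -2)%Z) by lia.
  destruct H as [->|[->|[->|[H|H]]]].
  - left. apply Rabs_R0.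
  - right; left. rewrite Rabs_left; lra.
  - right; left. rewrite Rabs_pos_eq; lra.
  - right; right. apply IZR_le in H. rewrite Rabs_pos_eq; lra.
  - right; right. apply IZR_le in H. rewrite Rabs_left; lra.
Qed.

(* The polynomial inequality behind the quadratic-form estimate, on the
   possible values X = |x| and M = |m|. *)
Lemma half_int_poly X M : (X = 1/2 \/ X >= 3/2) -> (M = 0 \/ M = 1 \/ M >= 2) ->
  0 <= X * X - X * M + M * M - X - M / 2 + 1/4.
Proof.
  intros HX HM. destruct HM as [->|[->|HM]].
  - nra.
  - destruct HX as [->|HX]; [nra|].
    assert (0 <= (X - 3/2) * (X - 1/2)) by (apply Rmult_le_pos; lra). nra.
  - assert (0 <= (2 * X - (M + 1)) * (2 * X - (M + 1))) by apply Rle_0_sqr.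
    assert (0 <= M * (3 * M - 4)) by (apply Rmult_le_pos; lra). nra.
Qed.

Lemma reduced_form_lower x m y1 y12 : 0 < y1 -> 0 <= 2 * y12 <= y1 ->
  (Rabs x = 1/2 \/ Rabs x >= 3/2) -> (Rabs m = 0 \/ Rabs m = 1 \/ Rabs m >= 2) ->
  y1 / 4 + y1 * (Rabs x - 1/2) + y1 / 2 * Rabs m <= x * x * y1 + 2 * x * m * y12 + m * m * y1.
Proof.
  intros Hy Hy12 HX HM.
  assert (HP := half_int_poly _ _ HX HM).
  assert (E1 : x * x = Rabs x * Rabs x) by (rewrite <- Rabs_mult, Rabs_pos_eq; nra).
  assert (E2 : m * m = Rabs m * Rabs m) by (rewrite <- Rabs_mult, Rabs_pos_eq; nra).
  assert (E3 : - (Rabs x * Rabs m) <= x * m).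
  { rewrite <- Rabs_mult. assert (H := Rabs_Ropp (x * m)). assert (H' := Rle_abs (- (x * m))). lra. }
  assert (HXM : 0 <= Rabs x * Rabs m) by (apply Rmult_le_pos; apply Rabs_pos).
  assert (E4 : - (Rabs x * Rabs m) * y1 <= 2 * x * m * y12) by nra.
  rewrite E1, E2. set (X := Rabs x) in *. set (M := Rabs m) in *. nra.
Qed.

Lemma normalized_lower_bound (c E M w r : R) :
  0 < c -> c * E = 1 -> 0 <= w -> 4 * c - c * M <= w ->
  (r <= 0 \/ (M <= 3 /\ r <= 1)) -> w * E >= r.
Proof.
  intros Hc HcE Hw HwM [Hr | [HM Hr]].
  - assert (0 < E) by nra. nra.
  - assert (c <= w) by nra. assert (0 < E) by nra. nra.
Qed.

Section ReducedDomain.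

Variable t : Sym2.
Hypothesis Im1_pos : 0 < Im1 t.
Hypothesis Im1_le_Im2 : Im1 t <= Im2 t.
Hypothesis Im12_reduced : 0 <= 2 * Im12 t <= Im1 t.

Lemma qform_first_lower n m :
  Im1 t / 4 + Im1 t * (Rabs (IZR n + 1/2) - 1/2) + Im1 t / 2 * Rabs (IZR m)
  <= qform t (IZR n + 1/2) (IZR m).
Proof.
  assert (H := reduced_form_lower (IZR n + 1/2) (IZR m) (Im1 t) (Im12 t)
                 Im1_pos Im12_reduced (half_int_abs n) (int_abs m)).
  assert (IZR m * IZR m * Im1 t <= IZR m * IZR m * Im2 t)
    by (apply Rmult_le_compat_l; [apply Rle_0_sqr|lra]).
  unfold qform. lra.
Qed.

Lemma qform_second_lower n m :
  Im2 t / 4 + Im1 t * (Rabs (IZR n + 1/2) - 1/2) + Im1 t / 2 * Rabs (IZR m)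
  <= qform t (IZR m) (IZR n + 1/2).
Proof.
  assert (H := reduced_form_lower (IZR n + 1/2) (IZR m) (Im1 t) (Im12 t)
                 Im1_pos Im12_reduced (half_int_abs n) (int_abs m)).
  assert (Hx : 1/4 <= (IZR n + 1/2) * (IZR n + 1/2)).
  { assert (E : (IZR n + 1/2) * (IZR n + 1/2) = Rabs (IZR n + 1/2) * Rabs (IZR n + 1/2))
      by (rewrite <- Rabs_mult, Rabs_pos_eq; [reflexivity|apply Rle_0_sqr]).
    rewrite E. destruct (half_int_abs n) as [-> | Hn]; nra. }
  assert (((IZR n + 1/2) * (IZR n + 1/2) - 1/4) * Im1 t
          <= ((IZR n + 1/2) * (IZR n + 1/2) - 1/4) * Im2 t)
    by (apply Rmult_le_compat_l; lra).
  unfold qform. lra.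
Qed.

Lemma majorant_first b n1 n2 :
  Cnorm (theta_term (1/2, 0) b C2zero t n1 n2)
  <= exp (- PI * Im1 t / 4) * geom_half (PI * Im1 t) n1 * geom_int (PI * Im1 t / 2) n2.
Proof.
  rewrite theta_term_norm. cbn [fst snd]. rewrite Rplus_0_r.
  unfold geom_half, geom_int. rewrite <- !exp_plus. apply exp_mono.
  assert (H := qform_first_lower n1 n2). assert (Hpi := PI_RGT_0).
  assert (H' := Rmult_le_compat_l PI _ _ (Rlt_le _ _ Hpi) H). lra.
Qed.

Lemma majorant_second b n1 n2 :
  Cnorm (theta_term (0, 1/2) b C2zero t n1 n2)
  <= exp (- PI * Im2 t / 4) * geom_int (PI * Im1 t / 2) n1 * geom_half (PI * Im1 t) n2.
Proof.
  rewrite theta_term_norm. cbn [fst snd]. rewrite Rplus_0_r.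
  unfold geom_half, geom_int. rewrite <- !exp_plus. apply exp_mono.
  assert (H := qform_second_lower n2 n1). assert (Hpi := PI_RGT_0).
  assert (H' := Rmult_le_compat_l PI _ _ (Rlt_le _ _ Hpi) H). lra.
Qed.

Lemma first_characteristic b2 :
  exists v : Cx, theta_is (1/2, 0) (0, b2) C2zero t v /\
    Cnorm v * exp (PI * aImA (1/2, 0) t) >= theta_bound (Im1 t) (Im2 t).
Proof.
  set (f := theta_term (1/2, 0) (0, b2) C2zero t).
  set (c := exp (- PI * Im1 t / 4)).
  assert (Hpy : 0 < PI * Im1 t) by (apply Rmult_lt_0_compat; [apply PI_RGT_0|lra]).
  destruct (two_dominant_terms f
              (fun n1 n2 => c * geom_half (PI * Im1 t) n1 * geom_int (PI * Im1 t / 2) n2)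
              (c * half_mass (Im1 t) * int_mass (Im1 t)) (0, 0)%Z (-1, 0)%Z
              (majorant_first (0, b2))) with (N0 := 1%nat) as [w [Hw1 [Hw2 Hw]]].
  - intros N. apply SQ_product_le; try (intros; left; apply exp_pos).
    + intros M. apply geom_half_mass, Hpy.
    + intros M. apply geom_int_mass. lra.
  - discriminate.
  - apply theta_term_first_pair.
  - unfold in_square; simpl; lia.
  - unfold in_square; simpl; lia.
  - exists w. split; [split; assumption|].
    assert (Hc : Cnorm (f 0%Z 0%Z) = c).
    { unfold f, c. rewrite theta_term_norm. f_equal. unfold qform. simpl. field. }
    cbn [fst snd] in Hw. rewrite Hc in Hw.
    apply (normalized_lower_bound c _ (half_mass (Im1 t) * int_mass (Im1 t)));
      [apply exp_pos| |apply Cnorm_nonneg|lra|].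
    + rewrite <- Hc. apply theta_term_0_normalized.
    + destruct (Rle_or_lt (Im1 t) (4/3)).
      * left. apply theta_bound_nonpos_first; lra.
      * right. split; [apply mass_product_le_3; lra|apply theta_bound_le_1; lra].
Qed.

Lemma second_characteristic b1 :
  exists v : Cx, theta_is (0, 1/2) (b1, 0) C2zero t v /\
    Cnorm v * exp (PI * aImA (0, 1/2) t) >= theta_bound (Im2 t) (Im1 t).
Proof.
  set (f := theta_term (0, 1/2) (b1, 0) C2zero t).
  set (c := exp (- PI * Im2 t / 4)).
  assert (Hpy : 0 < PI * Im1 t) by (apply Rmult_lt_0_compat; [apply PI_RGT_0|lra]).
  destruct (two_dominant_terms f
              (fun n1 n2 => c * geom_int (PI * Im1 t / 2) n1 * geom_half (PI * Im1 t) n2)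
              (c * int_mass (Im1 t) * half_mass (Im1 t)) (0, 0)%Z (0, -1)%Z
              (majorant_second (b1, 0))) with (N0 := 1%nat) as [w [Hw1 [Hw2 Hw]]].
  - intros N. apply SQ_product_le; try (intros; left; apply exp_pos).
    + intros M. apply geom_int_mass. lra.
    + intros M. apply geom_half_mass, Hpy.
  - discriminate.
  - apply theta_term_second_pair.
  - unfold in_square; simpl; lia.
  - unfold in_square; simpl; lia.
  - exists w. split; [split; assumption|].
    assert (Hc : Cnorm (f 0%Z 0%Z) = c).
    { unfold f, c. rewrite theta_term_norm. f_equal. unfold qform. simpl. field. }
    cbn [fst snd] in Hw. rewrite Hc in Hw.
    apply (normalized_lower_bound c _ (int_mass (Im1 t) * half_mass (Im1 t)));
      [apply exp_pos| |apply Cnorm_nonneg|lra|].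
    + rewrite <- Hc. apply theta_term_0_normalized.
    + destruct (Rle_or_lt (Im1 t) (4/3)).
      * left. apply theta_bound_nonpos_second; lra.
      * right. rewrite Rmult_comm.
        split; [apply mass_product_le_3; lra|apply theta_bound_le_1; lra].
Qed.

End ReducedDomain.

Theorem mainTheorem14 (t : Sym2) (Ht : in_F2 t) :
  (forall a b : R2,
      (a = (1/2, 0) /\ (b = (0, 0) \/ b = (0, 1/2))) ->
      exists v : Cx, theta_is a b C2zero t v /\
        Cnorm v * exp (PI * aImA a t) >= theta_bound (Im1 t) (Im2 t)) /\
  (Im1 t >= 4 -> theta_bound (Im1 t) (Im2 t) > 0) /\
  (forall a b : R2,
      (a = (0, 1/2) /\ (b = (0, 0) \/ b = (1/2, 0))) ->
      exists v : Cx, theta_is a b C2zero t v /\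
        Cnorm v * exp (PI * aImA a t) >= theta_bound (Im2 t) (Im1 t)).
Proof.
  destruct Ht as [[Hy1 _] [_ [_ [_ [Hy2 [Hy12 [Hy12' _]]]]]]].
  assert (Hred : 0 <= 2 * Im12 t <= Im1 t) by lra.
  split; [|split].
  - intros a b [-> [-> | ->]]; apply first_characteristic; lra.
  - intros H. apply theta_bound_pos; lra.
  - intros a b [-> [-> | ->]]; apply second_characteristic; lra.
Qed.
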